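(* Let $G$ be $\hbar$-perfect and let $G'$ be obtained from $G$ by splitting one vertex $v$, i.e. adding a new vertex $v'$ adjacent to $v$ and to exactly the neighbours of $v$ in $G$. Then $G'$ is $\hbar$-perfect.
   Context: A realization of a graph $G$ on $\{1,\dots,n\}$ is a tuple $(S_1,\dots,S_n)$ of Pauli strings (tensor products of matrices from $\{I,X,Y,Z\}$) of common length with $S_i,S_j$ anticommuting iff $i\sim j$ and commuting otherwise; every graph has one. For $w\in\mathbb{R}^n_{\ge0}$, $\beta(G,w)=\sup_\rho\sum_iw_i\operatorname{tr}(\rho S_i)^2$ over density matrices $\rho$ (independent of the realization), and $\alpha(G,w)=\max\{\sum_{i\in I}w_i: I\text{ independent set of }G\}$. $G$ is $\hbar$-perfect if $\beta(G,w)=\alpha(G,w)$ for all $w\in\mathbb{R}^n_{\ge0}$. *)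

From HB Require Import structures.
From mathcomp Require Import all_boot all_order all_algebra.
From mathcomp Require Import complex.
From mathcomp Require Import classical_sets reals.
Set Implicit Arguments. Unset Strict Implicit. Unset Printing Implicit Defensive.
Import Order.TTheory GRing.Theory Num.Theory.
Local Open Scope ring_scope.

Definition simple_graph (n : nat) (E : rel 'I_n) : Prop :=
  (forall i, ~~ E i i) /\ (forall i j, E i j = E j i).

(* Splitting vertex v: new vertex ord_max (= n) adjacent to v and to exactly
   the neighbours of v; old vertices keep their adjacencies. *)
Definition split_graph (n : nat) (E : rel 'I_n) (v : 'I_n) : rel 'I_n.+1 :=
  fun a b =>
    match unlift ord_max a, unlift ord_max b with
    | Some i, Some j => E i j
    | None, Some j => (j == v) || E v j
    | Some i, None => (i == v) || E i v
    | None, None => false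
    end.

Inductive pauli := PI | PX | PY | PZ.

Section Pauli.
Variable R : rcfType.
Local Open Scope complex_scope.

(* entry (a,b) of the 2x2 Pauli matrix, rows/columns indexed by bits *)
Definition pauli_entry (p : pauli) (a b : bool) : R[i] :=
  match p with
  | PI => if a == b then 1 else 0
  | PX => if a != b then 1 else 0
  | PY => match a, b with
          | false, true => - 'i
          | true, false => 'i
          | _, _ => 0
          end
  | PZ => match a, b with
          | false, false => 1
          | true, true => -1
          | _, _ => 0
          end
  end.

Definition bit (k : nat) (a : nat) : bool := odd (a %/ 2 ^ k).

(* the matrix of the Pauli string s_0 (x) s_1 (x) ... (x) s_{m-1}
   (Kronecker product, basis of C^{2^m} indexed by bit strings) *)
Definition pauli_string (m : nat) (s : 'I_m -> pauli) : 'M[R[i]]_(2 ^ m) :=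
  \matrix_(a, b) \prod_(k < m) pauli_entry (s k) (bit k a) (bit k b).

Definition adjmx (p q : nat) (A : 'M[R[i]]_(p, q)) : 'M[R[i]]_(q, p) :=
  map_mx Num.conj A^T.

Definition density (d : nat) (rho : 'M[R[i]]_d) : Prop :=
  adjmx rho = rho /\
  (forall v : 'cV[R[i]]_d, 0 <= (adjmx v *m rho *m v) 0 0) /\
  \tr rho = 1.
End Pauli.

Definition realization (R : rcfType) (n m : nat) (E : rel 'I_n)
    (S : 'I_n -> 'I_m -> pauli) : Prop :=
  forall i j : 'I_n,
    if E i j then
      pauli_string R (S i) *m pauli_string R (S j)
        = - (pauli_string R (S j) *m pauli_string R (S i))
    else
      pauli_string R (S i) *m pauli_string R (S j)
        = pauli_string R (S j) *m pauli_string R (S i).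

(* beta(G,w) computed with the realization S: supremum over density matrices
   of sum_i w_i tr(rho S_i)^2 (tr(rho S_i) is real, we take its real part) *)
Definition beta (R : realType) (n m : nat) (S : 'I_n -> 'I_m -> pauli)
    (w : 'I_n -> R) : R :=
  sup [set x : R | exists rho : 'M[R[i]]_(2 ^ m),
        density rho /\
        x = \sum_(i < n) w i * (complex.Re (\tr (rho *m pauli_string R (S i)))) ^+ 2].

Definition independent (n : nat) (E : rel 'I_n) (I : {set 'I_n}) : bool :=
  [forall i in I, forall j in I, ~~ E i j].

Definition alpha (R : realType) (n : nat) (E : rel 'I_n) (w : 'I_n -> R) : R :=
  \big[Num.max/0]_(I : {set 'I_n} | independent E I) \sum_(i in I) w i.

(* hbar-perfect: beta = alpha for every nonnegative weight vector; beta is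
   computed with an (arbitrary) realization, which is known not to matter. *)
Definition hbar_perfect (R : realType) (n : nat) (E : rel 'I_n) : Prop :=
  forall (m : nat) (S : 'I_n -> 'I_m -> pauli), realization R E S ->
  forall w : 'I_n -> R, (forall i, 0 <= w i) -> beta S w = alpha E w.

From mathcomp Require Import all_boot all_order all_algebra.
From mathcomp Require Import complex.
From mathcomp Require Import classical_sets reals.
From mathcomp Require Import boolp ring.
Set Implicit Arguments. Unset Strict Implicit. Unset Printing Implicit Defensive.
Import Order.TTheory GRing.Theory Num.Theory.
Local Open Scope ring_scope.

(* Let S realize the split graph G' and put P := S_v, P' := S_v'.  These two
   anticommute, while every other S_u commutes with both or anticommutes with
   both, hence commutes with Q := P P'.  Conjugating a state rho by a + b Q,
   where (a + i b)^2 = tr(rho P) + i tr(rho P'), gives a state rho' with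
   tr(rho' P)^2 = tr(rho P)^2 + tr(rho P')^2 and tr(rho' S_u) = tr(rho S_u)
   for all other u.  Hence beta(G', w) <= beta(G, w1), where w1_v is
   max(w_v, w_v') and w1 = w elsewhere.  Conversely G embeds in G' as an
   induced subgraph through the heavier copy of v, so beta(G', w) >=
   beta(G, w1).  Both bounds equal alpha(G, w1) = alpha(G', w), because an
   independent set of G' contains at most one of v, v'. *)


Lemma bit0E a : bit 0 a = odd a.
Proof. by rewrite /bit expn0 divn1. Qed.

Lemma bitSE k a : bit k.+1 a = bit k (a %/ 2).
Proof. by rewrite /bit expnS divnMA. Qed.

Lemma bit_inj m a c : (a < 2 ^ m)%N -> (c < 2 ^ m)%N ->
  (forall k, (k < m)%N -> bit k a = bit k c) -> a = c.
Proof.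
elim: m a c => [|m IH] a c.
  by rewrite expn0 !ltnS !leqn0 => /eqP -> /eqP ->.
move=> ha hc hb.
have half_eq : (a %/ 2 = c %/ 2)%N.
  apply: IH; try by rewrite ltn_divLR // -expnSr.
  by move=> k hk; rewrite -!bitSE; apply: hb.
have := hb 0%N (ltn0Sn _); rewrite !bit0E => odd_eq.
by rewrite (divn_eq a 2) (divn_eq c 2) half_eq !modn2 odd_eq.
Qed.

Lemma big_ord_double (C : nmodType) N (g : nat -> C) :
  \sum_(b < (2 * N)%N) g b = \sum_(q < N) (g (2 * q)%N + g (2 * q).+1).
Proof.
rewrite -(big_mkord xpredT g).
rewrite -(big_mkord xpredT (fun q => g (2 * q)%N + g (2 * q).+1)).
elim: N => [|N IH]; first by rewrite !big_geq.
by rewrite mulnS !addSn add0n !big_nat_recr //= IH addrA.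
Qed.

Lemma sum_bits_prod (C : comNzRingType) m (F : nat -> bool -> C) :
  \sum_(b < 2 ^ m) \prod_(k < m) F k (bit k b)
  = \prod_(k < m) (F k false + F k true).
Proof.
elim: m F => [|m IH] F; first by rewrite expn0 big_ord1 !big_ord0.
rewrite expnS (big_ord_double _ (fun b => \prod_(k < m.+1) F k (bit k b))).
rewrite big_ord_recl -(IH (fun k => F k.+1)) mulr_sumr; apply: eq_bigr => q _.
rewrite !big_ord_recl !bit0E /= oddM /= mulrDl.
congr (_ + _); congr (_ * _); apply: eq_bigr => k _;
  rewrite /bump leq0n add1n bitSE; congr (F _ (bit _ _)).
- by rewrite mulKn.
- by rewrite -addn1 mulnC divnMDl // divn_small // addn0.
Qed.

Section PauliStrings.
Variable R : rcfType.
Local Open Scope complex_scope.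

Lemma pauli_entry_conj p a b :
  Num.conj (pauli_entry R p a b) = pauli_entry R p b a.
Proof.
case: p; case: a; case: b;
  rewrite /= ?rmorphN ?rmorph0 ?rmorph1 ?conjCi ?opprK //.
by apply/eqP; rewrite eqr_oppLR; apply/eqP; apply: conjCi.
Qed.

Lemma pauli_entry_sqr p a c :
  pauli_entry R p a false * pauli_entry R p false c
  + pauli_entry R p a true * pauli_entry R p true c = (a == c)%:R.
Proof.
case: p; case: a; case: c;
  rewrite /= ?mulr0 ?mul0r ?mulr1 ?mul1r ?addr0 ?add0r ?mulrNN ?opprK //.
all: by apply/eqP; rewrite eq_complex /=; simpc; rewrite ?mulr1 ?mulr0 ?subr0 ?opprK ?eqxx.
Qed.

Lemma pauli_string_adj m (s : 'I_m -> pauli) :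
  adjmx (pauli_string R s) = pauli_string R s.
Proof.
apply/matrixP => a b; rewrite /adjmx !mxE rmorph_prod.
by apply: eq_bigr => k _; apply: pauli_entry_conj.
Qed.

Lemma pauli_string_sqr m (s : 'I_m -> pauli) :
  pauli_string R s *m pauli_string R s = 1%:M.
Proof.
apply/matrixP => a c; rewrite !mxE.
under eq_bigr => b _ do rewrite !mxE -big_split /=.
pose F k x := if insub k is Some k' then
  pauli_entry R (s k') (bit k a) x * pauli_entry R (s k') x (bit k c) else 0.
transitivity (\sum_(b < 2 ^ m) \prod_(k < m) F k (bit k b)).
  by apply: eq_bigr => b _; apply: eq_bigr => k _; rewrite /F valK.
rewrite sum_bits_prod.
transitivity (\prod_(k < m) ((bit k a == bit k c)%:R : R[i])).
  by apply: eq_bigr => k _; rewrite /F valK pauli_entry_sqr.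
have [->|ne] := eqVneq a c; first by rewrite big1 // => k _; rewrite eqxx.
have /existsP[k hk] : [exists k : 'I_m, bit k a != bit k c].
  apply: contraR ne => /existsPn same; apply/eqP/val_inj.
  apply: (@bit_inj m); try exact: ltn_ord.
  by move=> k hk; apply/eqP; move: (same (Ordinal hk)); rewrite negbK.
by rewrite (bigD1 k) //= (negbTE hk) mul0r.
Qed.

End PauliStrings.

Section ComplexMatrices.
Variable R : rcfType.
Local Open Scope complex_scope.
Local Notation C := R[i].

Lemma adjmxK p q (X : 'M[C]_(p, q)) : adjmx (adjmx X) = X.
Proof. by apply/matrixP => i j; rewrite /adjmx !mxE conjCK. Qed.

Lemma adjmxM p q r (X : 'M[C]_(p, q)) (Y : 'M[C]_(q, r)) :
  adjmx (X *m Y) = adjmx Y *m adjmx X.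
Proof. by rewrite /adjmx trmx_mul map_mxM. Qed.

Lemma adjmxD p q (X Y : 'M[C]_(p, q)) : adjmx (X + Y) = adjmx X + adjmx Y.
Proof. by apply/matrixP => i j; rewrite /adjmx !mxE rmorphD. Qed.

Lemma adjmxZ p q (c : C) (X : 'M[C]_(p, q)) : adjmx (c *: X) = Num.conj c *: adjmx X.
Proof. by apply/matrixP => i j; rewrite /adjmx !mxE rmorphM. Qed.

Lemma adjmx1 d : adjmx (1%:M : 'M[C]_d) = 1%:M.
Proof. by apply/matrixP => i j; rewrite /adjmx !mxE eq_sym rmorph_nat. Qed.

Lemma conjC_real (x : R) : Num.conj (x%:C : C) = x%:C.
Proof. by apply: conj_Creal; rewrite complex_real. Qed.

Lemma Re_realM (x : R) (z : C) : complex.Re (x%:C * z) = x * complex.Re z.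
Proof. by case: z => a b /=; rewrite mul0r subr0. Qed.

Lemma ReD (u v : C) : complex.Re (u + v) = complex.Re u + complex.Re v.
Proof. by case: u; case: v. Qed.

Lemma density_conj d (rho U : 'M[C]_d) (K : R) :
  density rho -> 0 < K -> adjmx U *m U = K%:C *: 1%:M ->
  density ((K%:C)^-1 *: (U *m rho *m adjmx U)).
Proof.
move=> [rho_adj [rho_psd rho_tr]] K_gt0 UU.
have K_neq0 : K%:C != 0 by rewrite eq_complex /= negb_and gt_eqF.
split; [|split].
- rewrite adjmxZ !adjmxM adjmxK rho_adj fmorphV mulmxA.
  by congr (_^-1 *: _); apply: conjC_real.
- move=> x; rewrite -scalemxAr -scalemxAl mxE.
  apply: mulr_ge0; first by rewrite invr_ge0 ler0c ltW.
  by have := rho_psd (adjmx U *m x); rewrite adjmxM adjmxK !mulmxA.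
- rewrite mxtraceZ -mulmxA mxtrace_mulC -mulmxA UU -scalemxAr mulmx1.
  by rewrite mxtraceZ rho_tr mulr1 mulVf.
Qed.

Lemma density_exists d : (0 < d)%N -> exists rho : 'M[C]_d, density rho.
Proof.
case: d => // d _; exists (delta_mx 0 0); split; [|split].
- by apply/matrixP => i j; rewrite /adjmx !mxE andbC rmorph_nat.
- move=> x; rewrite !mxE big_ord_recl big1 => [|k _]; last first.
    rewrite mxE big1 ?mul0r // => j _.
    by rewrite !mxE [lift _ _ == _]eq_sym (negbTE (neq_lift _ _)) andbF mulr0.
  rewrite addr0 mxE big_ord_recl big1 => [|j _]; last first.
    by rewrite !mxE [lift _ _ == _]eq_sym (negbTE (neq_lift _ _)) mulr0.
  by rewrite !mxE !eqxx mulr1 addr0 mulrC mul_conjC_ge0.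
- rewrite /mxtrace (bigD1 0) //= mxE eqxx big1 ?addr0 // => i /negbTE i_neq0.
  by rewrite mxE i_neq0.
Qed.

End ComplexMatrices.

Section Rotation.
Variables (R : rcfType) (d : nat) (A B : 'M[R[i]]_d).
Hypotheses (A_adj : adjmx A = A) (B_adj : adjmx B = B).
Hypotheses (AA : A *m A = 1%:M) (BB : B *m B = 1%:M) (AB : A *m B = - (B *m A)).
Local Open Scope complex_scope.
Local Notation Q := (A *m B).

Lemma mulQA : Q *m A = - B.
Proof. by rewrite AB mulNmx -mulmxA AA mulmx1. Qed.

Lemma mulAQ : A *m Q = B.
Proof. by rewrite mulmxA AA mul1mx. Qed.

Lemma mulQQ : Q *m Q = - 1%:M.
Proof. by rewrite mulmxA mulQA mulNmx BB. Qed.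

Lemma mulQAQ : Q *m A *m Q = A.
Proof.
by rewrite mulQA mulNmx mulmxA -[B *m A]opprK -AB mulNmx opprK -mulmxA BB mulmx1.
Qed.

Lemma adjmxQ : adjmx Q = - Q.
Proof. by rewrite adjmxM A_adj B_adj AB opprK. Qed.

Definition rot (a b : R) : 'M[R[i]]_d := a%:C *: 1%:M + b%:C *: Q.

Lemma adjmx_rot a b : adjmx (rot a b) = a%:C *: 1%:M - b%:C *: Q.
Proof. by rewrite adjmxD !adjmxZ adjmx1 adjmxQ !conjC_real scalerN. Qed.

Lemma rot_conj a b X :
  adjmx (rot a b) *m X *m rot a b =
  (a * a)%:C *: X + (a * b)%:C *: (X *m Q - Q *m X) - (b * b)%:C *: (Q *m X *m Q).
Proof.
rewrite adjmx_rot /rot !(mulmxDl, mulmxDr, mulNmx, mulmxN) -!scalemxAl -!scalemxAr.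
rewrite !mul1mx !mulmx1 !scalerA ?mulmxA !scalerBr !rmorphM (mulrC b%:C) !addrA.
by congr (_ - _); rewrite addrAC.
Qed.

Lemma rot_conj_comm a b X : Q *m X = X *m Q ->
  adjmx (rot a b) *m X *m rot a b = (a * a + b * b)%:C *: X.
Proof.
move=> QX; rewrite rot_conj QX subrr scaler0 addr0 -mulmxA mulQQ mulmxN mulmx1.
by rewrite scalerN opprK -scalerDl rmorphD.
Qed.

Lemma rot_conj_A a b :
  adjmx (rot a b) *m A *m rot a b = (a * a - b * b)%:C *: A + (a * b *+ 2)%:C *: B.
Proof.
rewrite rot_conj mulAQ mulQAQ mulQA opprK; apply/matrixP => i j; rewrite !mxE.
by rewrite rmorphB rmorphMn !rmorphM; ring.
Qed.

Lemma rotate_state rho : density rho ->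
  exists rho', density rho' /\
    complex.Re (\tr (rho' *m A)) ^+ 2
      = complex.Re (\tr (rho *m A)) ^+ 2 + complex.Re (\tr (rho *m B)) ^+ 2 /\
    forall X, Q *m X = X *m Q -> \tr (rho' *m X) = \tr (rho *m X).
Proof.
move=> rhoD; set x := complex.Re _; set y := complex.Re _.
have [/andP[/eqP x0 /eqP y0]|xy_neq0] := boolP ((x == 0) && (y == 0)).
  by exists rho; rewrite -/x -/y x0 y0 expr0n addr0.
have [a [b [ab_x ab_y]]] : exists a b : R, a * a - b * b = x /\ a * b *+ 2 = y.
  have := sqr_sqrtc (x +i* y); case: (sqrtc _) => a b; rewrite expr2; simpc.
  by case=> ab_x ab_y; exists a, b; split; rewrite -?ab_y ?mulr2n ?(mulrC b).
set K := a * a + b * b.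
have K_sqr : K ^+ 2 = x ^+ 2 + y ^+ 2 by rewrite /K -ab_x -ab_y; ring.
have K_gt0 : 0 < K.
  rewrite lt0r /K addr_ge0 -?expr2 ?sqr_ge0 // andbT -/K.
  apply: contra xy_neq0 => /eqP K0; move/eqP: K_sqr.
  by rewrite K0 expr0n eq_sym paddr_eq0 ?sqr_ge0 // !sqrf_eq0.
have K_neq0 : K%:C != 0 by rewrite eq_complex /= negb_and gt_eqF.
pose rho' := (K%:C)^-1 *: (rot a b *m rho *m adjmx (rot a b)).
have tr_rho' X :
    \tr (rho' *m X) = (K%:C)^-1 * \tr (rho *m (adjmx (rot a b) *m X *m rot a b)).
  by rewrite -scalemxAl mxtraceZ -!mulmxA mxtrace_mulC !mulmxA.
exists rho'; split; [|split].
- apply: density_conj => //.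
  by rewrite -[adjmx _]mulmx1 rot_conj_comm ?mulmx1 ?mul1mx.
- rewrite tr_rho' rot_conj_A mulmxDr mxtraceD -!scalemxAr !mxtraceZ.
  rewrite -fmorphV !mulrDr !mulrA -!rmorphM ReD !Re_realM -/x -/y.
  rewrite -!mulrA -mulrDr ab_x ab_y -!expr2 -K_sqr.
  by rewrite expr2 mulKf // gt_eqF.
- move=> X QX; rewrite tr_rho' rot_conj_comm // -scalemxAr mxtraceZ.
  by rewrite mulrA mulVf // mul1r.
Qed.

End Rotation.

Lemma commmx_mul_same_sign (T : pzRingType) d (s : bool) (A B X : 'M[T]_d) :
  (if s then A *m X = - (X *m A) else A *m X = X *m A) ->
  (if s then B *m X = - (X *m B) else B *m X = X *m B) ->
  A *m B *m X = X *m (A *m B).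
Proof.
by case: s => AX BX; rewrite -mulmxA BX ?mulmxN mulmxA AX ?mulNmx ?opprK -mulmxA.
Qed.

Section Sup.
Variable R : realType.
Local Open Scope classical_set_scope.

Lemma sup_squeeze (A B : set R) s :
  A !=set0 -> sup A = s -> A `<=` down B -> ubound B s -> sup B = s.
Proof.
move=> A_ne supA AB Bs.
have B_ne : B !=set0 by case: A_ne => a /AB/downP[b Bb _]; exists b.
apply/eqP; rewrite eq_le ge_sup //= -[X in X <= _]supA.
by apply: sup_le => //; split => //; exists s.
Qed.

End Sup.

Section BetaAlpha.
Variable R : realType.

Definition beta_value n m (S : 'I_n -> 'I_m -> pauli) (w : 'I_n -> R)
    (rho : 'M[R[i]]_(2 ^ m)) : R :=
  \sum_(i < n) w i * complex.Re (\tr (rho *m pauli_string R (S i))) ^+ 2.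

Definition beta_set n m (S : 'I_n -> 'I_m -> pauli) (w : 'I_n -> R) : set R :=
  [set x | exists rho, density rho /\ x = beta_value S w rho].

Lemma betaE n m (S : 'I_n -> 'I_m -> pauli) w : beta S w = sup (beta_set S w).
Proof. by []. Qed.

Lemma le_alpha n (E : rel 'I_n) (w : 'I_n -> R) (I : {set 'I_n}) :
  independent E I -> \sum_(i in I) w i <= alpha E w.
Proof. exact: le_bigmax_cond. Qed.

Lemma alpha_le n (E : rel 'I_n) (w : 'I_n -> R) c :
  0 <= c -> (forall I, independent E I -> \sum_(i in I) w i <= c) -> alpha E w <= c.
Proof. exact: bigmax_le. Qed.

Lemma independentP n (E : rel 'I_n) (I : {set 'I_n}) :
  reflect (forall i j, i \in I -> j \in I -> ~~ E i j) (independent E I).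
Proof.
apply: (iffP forall_inP) => [indep i j /indep/forall_inP|indep i iI]; first exact.
by apply/forall_inP => j; apply: indep.
Qed.

Lemma alpha_ge0 n (E : rel 'I_n) (w : 'I_n -> R) : 0 <= alpha E w.
Proof.
have := @le_alpha n E w finset.set0; rewrite big_set0; apply.
by apply/independentP => i j; rewrite inE.
Qed.

Lemma perfect_has_sup n (E : rel 'I_n) m (S : 'I_n -> 'I_m -> pauli) w :
  (forall i, ~~ E i i) -> hbar_perfect R E -> realization R E S ->
  (forall i, 0 <= w i) -> has_sup (beta_set S w).
Proof.
move=> E_irr hp hS w_ge0.
have [rho0 rho0D] := @density_exists R (2 ^ m) (expn_gt0 2 m).
split; first by exists (beta_value S w rho0), rho0.
(* the indicator weight of i has alpha >= 1, so its beta set has a supremum *)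
have term_bound i : exists b, forall rho, density rho ->
    complex.Re (\tr (rho *m pauli_string R (S i))) ^+ 2 <= b.
  pose e j : R := (j == i)%:R.
  have [_ [b ub_b]] : has_sup (beta_set S e).
    apply: contrapT => no_sup; have := hp m S hS e (fun j => ler0n _ _).
    rewrite betaE sup_out // => alpha_e0.
    have : \sum_(j in [set i]) e j <= alpha E e.
      by apply: le_alpha; apply/independentP => a b /set1P-> /set1P->.
    by rewrite big_set1 /e eqxx -alpha_e0 ler10.
  exists b => rho rhoD; apply: ub_b; exists rho; split => //.
  rewrite /beta_value (bigD1 i) //= big1 ?addr0 /e ?eqxx ?mul1r // => j /negbTE ->.
  by rewrite mul0r.
have [b ub_b] := choice term_bound.
exists (\sum_i w i * b i) => _ [rho [rhoD ->]].
by apply: ler_sum => i _; apply: ler_wpM2l => //; apply: ub_b.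
Qed.

End BetaAlpha.

Lemma ler_sum_inj (R : numDomainType) k l (f : 'I_k -> 'I_l) (g : 'I_l -> R) :
  injective f -> (forall j, 0 <= g j) -> \sum_i g (f i) <= \sum_j g j.
Proof.
move=> f_inj g_ge0.
have -> : \sum_i g (f i) = \sum_(i in [set: 'I_k]) g (f i).
  by apply: eq_bigl => i; rewrite inE.
rewrite -(big_imset _ (in2W f_inj)) /= big_mkcond.
by apply: ler_sum => j _; case: ifP.
Qed.

Lemma realization_comp (R : rcfType) n k m (E : rel 'I_n) (F : rel 'I_k)
    (S : 'I_n -> 'I_m -> pauli) (f : 'I_k -> 'I_n) :
  realization R E S -> (forall i j, E (f i) (f j) = F i j) -> realization R F (S \o f).
Proof. by move=> hS Ef i j; rewrite -Ef; apply: hS. Qed.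

Section SplitGraph.
Variables (n : nat) (E : rel 'I_n) (v : 'I_n).
Local Notation E' := (split_graph E v).
Local Notation v' := (@ord_max n).
Local Notation lift := (lift ord_max).

Lemma split_graph_lift i j : E' (lift i) (lift j) = E i j.
Proof. by rewrite /split_graph !liftK. Qed.

Lemma split_graph_new_lift j : E' v' (lift j) = (j == v) || E v j.
Proof. by rewrite /split_graph unlift_none liftK. Qed.

Lemma split_graph_lift_new i : E' (lift i) v' = (i == v) || E i v.
Proof. by rewrite /split_graph unlift_none liftK. Qed.

Lemma split_graph_new_new : E' v' v' = false.
Proof. by rewrite /split_graph unlift_none. Qed.

Variables (R : realType) (w : 'I_n.+1 -> R).
Hypothesis E_irr : forall i, ~~ E i i.
Hypothesis w_ge0 : forall i, 0 <= w i.

Definition merge_weight i : R :=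
  if i == v then Num.max (w (lift v)) (w v') else w (lift i).

Definition heavy_emb i : 'I_n.+1 :=
  if (i == v) && (w (lift v) < w v') then v' else lift i.

Lemma merge_weight_ge0 i : 0 <= merge_weight i.
Proof. by rewrite /merge_weight; case: ifP; rewrite ?le_max w_ge0. Qed.

Lemma heavy_emb_weight i : w (heavy_emb i) = merge_weight i.
Proof.
rewrite /heavy_emb /merge_weight; case: eqVneq => [->|] //=.
by case: ltP.
Qed.

Lemma heavy_emb_inj : injective heavy_emb.
Proof.
move=> i j; rewrite /heavy_emb; case: (_ < _); rewrite ?andbT ?andbF;
  last exact: lift_inj.
case: (eqVneq i v) => [->|iv]; case: (eqVneq j v) => [->|jv] //=;
  try exact: lift_inj.
- by move/eqP; rewrite (negbTE (neq_lift _ _)).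
- by move/eqP; rewrite eq_sym (negbTE (neq_lift _ _)).
Qed.

Lemma split_graph_heavy_emb i j : E' (heavy_emb i) (heavy_emb j) = E i j.
Proof.
rewrite /heavy_emb; case: (_ < _); rewrite ?andbT ?andbF ?split_graph_lift //.
case: (eqVneq i v) => [->|iv]; case: (eqVneq j v) => [->|jv] /=;
  rewrite ?split_graph_new_new ?split_graph_new_lift ?split_graph_lift_new
    ?split_graph_lift ?(negbTE (E_irr v)) ?(negbTE iv) ?(negbTE jv) //.
Qed.

Lemma alpha_split_graph_le : alpha E' w <= alpha E merge_weight.
Proof.
apply: alpha_le => [|I /independentP I_indep]; first exact: alpha_ge0.
pose J := [set i | (lift i \in I) || ((i == v) && (v' \in I))].
have J_indep : independent E J.
  apply/independentP => i j; rewrite !inE.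
  case/orP => [iI|/andP[/eqP-> v'I]]; case/orP => [jI|/andP[/eqP-> v'I']].
  - by rewrite -split_graph_lift I_indep.
  - by move: (I_indep _ _ iI v'I'); rewrite split_graph_lift_new negb_or => /andP[].
  - by move: (I_indep _ _ v'I jI); rewrite split_graph_new_lift negb_or => /andP[].
  - exact: E_irr.
apply: le_trans (le_alpha merge_weight J_indep).
rewrite big_mkcond (bigD1_ord v') //= (bigD1 v) //= [leRHS]big_mkcond [leRHS](bigD1 v) //=.
rewrite addrA lerD //.
  rewrite inE eqxx /merge_weight eqxx.
  case vI: (lift v \in I); case v'I: (v' \in I) => /=.
  - by move: (I_indep _ _ vI v'I); rewrite split_graph_lift_new eqxx.
  - by rewrite add0r le_max lexx.
  - by rewrite addr0 le_max lexx orbT.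
  - by rewrite addr0.
apply: ler_sum => i iv; rewrite inE (negbTE iv) orbF /merge_weight (negbTE iv).
by case: ifP.
Qed.

Lemma alpha_split_graph_ge : alpha E merge_weight <= alpha E' w.
Proof.
apply: alpha_le => [|I I_indep]; first exact: alpha_ge0.
rewrite -(eq_bigr _ (fun i _ => heavy_emb_weight i)).
rewrite -(big_imset _ (in2W heavy_emb_inj)) /=.
apply: le_alpha; apply/independentP => _ _ /imsetP[i iI ->] /imsetP[j jI ->].
by rewrite split_graph_heavy_emb; move/independentP: I_indep; apply.
Qed.

Lemma alpha_split_graph : alpha E' w = alpha E merge_weight.
Proof. by apply/le_anti; rewrite alpha_split_graph_le alpha_split_graph_ge. Qed.

Variables (m : nat) (S' : 'I_n.+1 -> 'I_m -> pauli).

Lemma beta_value_heavy_emb rho :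
  beta_value (S' \o heavy_emb) merge_weight rho <= beta_value S' w rho.
Proof.
rewrite /beta_value; under eq_bigr => i _ do rewrite /= -heavy_emb_weight.
pose g j := w j * complex.Re (\tr (rho *m pauli_string R (S' j))) ^+ 2.
apply: (@ler_sum_inj _ _ _ heavy_emb g heavy_emb_inj) => j.
by rewrite mulr_ge0 ?sqr_ge0.
Qed.

Lemma beta_value_rotate rho : realization R E' S' -> density rho ->
  exists2 rho', density rho' &
    beta_value S' w rho <= beta_value (S' \o lift) merge_weight rho'.
Proof.
move=> hS' rhoD; pose P j := pauli_string R (S' j).
have anti : P (lift v) *m P v' = - (P v' *m P (lift v)).
  by have := hS' (lift v) v'; rewrite split_graph_lift_new eqxx.
have [rho' [rho'D [sqr_eq tr_eq]]] := rotate_state (pauli_string_adj _ _)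
  (pauli_string_adj _ _) (pauli_string_sqr _ _) (pauli_string_sqr _ _) anti rhoD.
exists rho' => //.
rewrite /beta_value (bigD1_ord v') //= (bigD1 v) //= [leRHS](bigD1 v) //= addrA.
apply: lerD.
  rewrite /merge_weight eqxx sqr_eq mulrDr addrC.
  by rewrite lerD // ler_wpM2r ?sqr_ge0 // le_max lexx ?orbT.
apply: ler_sum => i iv; rewrite /merge_weight (negbTE iv) tr_eq //.
have := hS' v' (lift i); have := hS' (lift v) (lift i).
rewrite split_graph_lift split_graph_new_lift (negbTE iv) /=.
exact: commmx_mul_same_sign.
Qed.

End SplitGraph.

Theorem mainTheorem8 (R : realType) (n : nat) (E : rel 'I_n) (v : 'I_n) :
  simple_graph E -> hbar_perfect R E -> hbar_perfect R (split_graph E v).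
Proof.
move=> [E_irr _] hp m S' hS' w w_ge0.
have hL := realization_comp hS' (split_graph_lift E v).
have hH := realization_comp hS' (split_graph_heavy_emb v w E_irr).
have mw_ge0 := merge_weight_ge0 v w_ge0.
rewrite (alpha_split_graph v w E_irr) betaE.
apply: (sup_squeeze (A := beta_set (S' \o heavy_emb v w) (merge_weight v w))).
- have [rho0 rho0D] := density_exists R (expn_gt0 2 m).
  by exists (beta_value (S' \o heavy_emb v w) (merge_weight v w) rho0), rho0.
- by rewrite -betaE; apply: hp.
- move=> _ [rho [rhoD ->]]; apply/downP; exists (beta_value S' w rho).
    by exists rho.
  exact: beta_value_heavy_emb.
- move=> _ [rho [rhoD ->]]; have [rho' rho'D le_rho'] := beta_value_rotate w hS' rhoD.
  apply: le_trans le_rho' _; rewrite -(hp _ _ hL _ mw_ge0) betaE.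
  have [_ bounded] := perfect_has_sup E_irr hp hL mw_ge0.
  by apply: ub_le_sup => //; exists rho'.
Qed.
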